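(* If the Markov monoid of a probabilistic automaton $\mathcal{A}$ contains a non-simplicity witness, then $\mathcal{A}$ is not simple.
   Context: Fix a finite alphabet $A$ and a probabilistic automaton $\mathcal{A}=(Q,q_0,\Delta,F)$, $\Delta:Q\times A\to\mathcal{D}(Q)$. For $a\in A$ let $M_a(s,t)=\Delta(s,a)(t)$, for $u=a_0\cdots a_{n-1}$ let $M_u=M_{a_0}\cdots M_{a_{n-1}}$ (identity for the empty word), $\mathbb{P}_{\mathcal{A}}(s\xrightarrow{u}t)=M_u(s,t)$ and $\mathbb{P}_{\mathcal{A}}(s\xrightarrow{u}T)=\sum_{t\in T}\mathbb{P}_{\mathcal{A}}(s\xrightarrow{u}t)$. For $w\in A^\omega$, $w_{<k}$ is its prefix of length $k$. The process induced by $w\in A^\omega$ from $p\in Q$ is simple if there exist $\lambda>0$ and sequences $(A_k),(B_k)$ of subsets of $Q$ with $A_k\cap B_k=\emptyset$, $A_k\cup B_k=Q$ for all $k$, $\mathbb{P}_{\mathcal{A}}(p\xrightarrow{w_{<k}}q)\ge\lambda$ for all $k$ and $q\in A_k$, and $\lim_n\mathbb{P}_{\mathcal{A}}(p\xrightarrow{w_{<n}}B_n)=0$; $\mathcal{A}$ is simple if every such process (all $w$, all $p$) is simple. A limit-word is a map $\mathbf{u}:Q\times Q\to\{0,1\}$ such that every $s$ has some $t$ with $\mathbf{u}(s,t)=1$. Concatenation: $(\mathbf{u}\cdot\mathbf{v})(s,t)=1$ iff there is $q$ with $\mathbf{u}(s,q)=\mathbf{v}(q,t)=1$ (written $\mathbf{u}\mathbf{v}$).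 $\mathbf{u}$ is idempotent if $\mathbf{u}\mathbf{u}=\mathbf{u}$; for idempotent $\mathbf{u}$, $s$ is $\mathbf{u}$-recurrent if for all $t$, $\mathbf{u}(s,t)=1\Rightarrow\mathbf{u}(t,s)=1$, and $\mathbf{u}$-transient otherwise; $\mathbf{u}^\sharp(s,t)=1$ iff $\mathbf{u}(s,t)=1$ and $t$ is $\mathbf{u}$-recurrent. For $a\in A$, $\mathbf{a}(s,t)=1$ iff $\Delta(s,a)(t)>0$; $\mathbf{1}$ is the identity. The Markov monoid of $\mathcal{A}$ is the smallest set of limit-words containing $\{\mathbf{a}\mid a\in A\}\cup\{\mathbf{1}\}$ and closed under concatenation and iteration of idempotents. A non-simplicity witness is a triple $(\mathbf{u},\mathbf{v},\mathbf{w})$ of elements of the Markov monoid, with $\mathbf{v}$ idempotent, for which there exist states $r,t$ such that: $\mathbf{u}\mathbf{v}^\sharp\mathbf{w}$ is idempotent, $r$ is $\mathbf{u}\mathbf{v}^\sharp\mathbf{w}$-recurrent, $(\mathbf{u}\mathbf{v})(r,t)=1$, and $t$ is $\mathbf{v}$-transient. *)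

From HB Require Import structures.
From mathcomp Require Import all_boot all_order all_algebra.
From mathcomp Require Import all_classical all_reals all_analysis.
Set Implicit Arguments. Unset Strict Implicit. Unset Printing Implicit Defensive.
Import Order.TTheory GRing.Theory Num.Theory.
Import numFieldNormedType.Exports.
Local Open Scope ring_scope.

(* A probabilistic automaton (Q, q0, Delta, F) over a finite alphabet A;
   delta a s t = Delta(s, a)(t), and Delta(s, a) is a probability distribution. *)
Record PA (R : realType) (Q A : finType) := MkPA {
  q0 : Q;
  delta : A -> Q -> Q -> R;
  final : {set Q};
  delta_ge0 : forall a s t, 0 <= delta a s t;
  delta_sum1 : forall a s, \sum_(t : Q) delta a s t = 1
}.

Section Defs.
Context {R : realType} {Q A : finType} (aut : PA R Q A).

(* P(s --u--> t) = M_u(s,t), with M_{a0...a(n-1)} = M_{a0} ... M_{a(n-1)}. *)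
Fixpoint prob (s : Q) (u : seq A) (t : Q) : R :=
  match u with
  | [::] => (s == t)%:R
  | a :: u' => \sum_(q : Q) delta aut a s q * prob q u' t
  end.

Definition prob_set (s : Q) (u : seq A) (T : {set Q}) : R :=
  \sum_(t in T) prob s u t.

Definition prefix (w : nat -> A) (k : nat) : seq A := mkseq w k.

Definition simple_process (w : nat -> A) (p : Q) : Prop :=
  exists (lam : R), 0 < lam /\
  exists (As Bs : nat -> {set Q}),
    (forall k, [disjoint As k & Bs k] /\ As k :|: Bs k = [set: Q]) /\
    (forall k q, q \in As k -> lam <= prob p (prefix w k) q) /\
    ((fun n : nat => prob_set p (prefix w n) (Bs n)) @ \oo --> (0 : R))%classic.

Definition simple : Prop := forall (w : nat -> A) (p : Q), simple_process w p.

(* Limit-words are represented as boolean relations on Q. *)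
Definition limit_word (u : rel Q) : Prop := forall s, exists t, u s t.

Definition lw_cat (u v : rel Q) : rel Q := fun s t => [exists q, u s q && v q t].

Definition idempotent (u : rel Q) : Prop := forall s t, lw_cat u u s t = u s t.

Definition recurrent (u : rel Q) (s : Q) : bool := [forall t, u s t ==> u t s].

Definition transient (u : rel Q) (s : Q) : bool := ~~ recurrent u s.

Definition lw_sharp (u : rel Q) : rel Q := fun s t => u s t && recurrent u t.

Definition lw_letter (a : A) : rel Q := fun s t => 0 < delta aut a s t.

Definition lw_one : rel Q := fun s t => s == t.

Inductive markov_monoid : rel Q -> Prop :=
| mm_letter a : markov_monoid (lw_letter a)
| mm_one : markov_monoid lw_one
| mm_cat u v : markov_monoid u -> markov_monoid v -> markov_monoid (lw_cat u v)
| mm_sharp u : markov_monoid u -> idempotent u -> markov_monoid (lw_sharp u).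

Definition non_simplicity_witness (u v w : rel Q) : Prop :=
  markov_monoid u /\ markov_monoid v /\ markov_monoid w /\ idempotent v /\
  exists r t : Q,
    idempotent (lw_cat (lw_cat u (lw_sharp v)) w) /\
    recurrent (lw_cat (lw_cat u (lw_sharp v)) w) r /\
    lw_cat u v r t /\
    transient v t.

End Defs.

(* Let z = u v^# w.  Realize u, v^# (by a power V^k of a word V realizing v)
   and w by words U, X, W with errors tending to 0, and concatenate the blocks
   U_n X_n W_n.  Started in r, the mass stays in the z-class of r (the leaks are
   summable) and each block returns it to r with probability bounded below; the
   path r -U_n-> q -X_n-> t has positive probability, yet t, being v-transient,
   receives probability tending to 0.  This contradicts simplicity: once a
   state carries non-negligible probability, every state reachable from it with
   positive probability must carry at least lambda. *)

From Pilot Require Import Defs.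
From HB Require Import structures.
From mathcomp Require Import all_boot all_order all_algebra.
From mathcomp Require Import all_classical all_reals all_analysis.
From mathcomp Require Import ring lra.
Set Implicit Arguments. Unset Strict Implicit. Unset Printing Implicit Defensive.
Import Order.TTheory GRing.Theory Num.Theory.
Local Open Scope ring_scope.

Section BlockWord.
Variables (T : Type) (B : nat -> seq T).

Fixpoint blocks n := if n is m.+1 then blocks m ++ B m else [::].

Lemma blocks_cat m n : (m <= n)%N -> exists y, blocks n = blocks m ++ y.
Proof.
elim: n => [|n IH]; first by rewrite leqn0 => /eqP ->; exists [::].
rewrite leq_eqVlt => /orP [/eqP -> | /IH [y eq_n]]; first by exists [::]; rewrite cats0.
by exists (y ++ B n); rewrite /= eq_n catA.
Qed.

Lemma nth_blocks t0 m n i : (i < size (blocks m))%N -> (m <= n)%N ->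
  nth t0 (blocks n) i = nth t0 (blocks m) i.
Proof. by move=> lt_i /blocks_cat [y ->]; rewrite nth_cat lt_i. Qed.

Hypothesis B_nonempty : forall n, (0 < size (B n))%N.

Lemma size_blocks_ge n : (n <= size (blocks n))%N.
Proof.
elim: n => //= n IH; rewrite size_cat -addn1.
exact: leq_add IH (B_nonempty n).
Qed.

Variable t0 : T.

Definition blocks_word (i : nat) : T := nth t0 (blocks i.+1) i.

Lemma prefix_blocks_word n y y' : B n = y ++ y' ->
  mkseq blocks_word (size (blocks n ++ y)) = blocks n ++ y.
Proof.
move=> eq_B; apply: (@eq_from_nth _ t0); first by rewrite size_mkseq.
move=> i; rewrite size_mkseq => lt_i; rewrite nth_mkseq // /blocks_word.
have -> : blocks n ++ y = take (size (blocks n ++ y)) (blocks n.+1).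
  by rewrite /= eq_B catA take_size_cat.
have lt_i_n : (i < size (blocks n.+1))%N.
  by rewrite /= eq_B catA size_cat (leq_trans lt_i) ?leq_addr.
pose k := maxn i.+1 n.+1.
rewrite nth_take // -(@nth_blocks t0 i.+1 k) ?leq_maxl ?(size_blocks_ge i.+1) //.
by rewrite -(@nth_blocks t0 n.+1 k) ?leq_maxr.
Qed.

End BlockWord.

Section Automaton.
Context {R : realType} {Q A : finType} (aut : PA R Q A).
Local Notation P := (prob aut).

Lemma prob_ge0 s y t : 0 <= P s y t.
Proof.
elim: y s => [|a y IH] s /=; first by rewrite ler0n.
by apply: sumr_ge0 => q _; rewrite mulr_ge0 ?delta_ge0.
Qed.

Lemma prob_nil s t : P s [::] t = (s == t)%:R.
Proof. by []. Qed.

Lemma prob_nil_id s : P s [::] s = 1.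
Proof. by rewrite prob_nil eqxx. Qed.

Lemma prob_sum1 s y : \sum_t P s y t = 1.
Proof.
elim: y s => [|a y IH] s.
  by rewrite (bigD1 s) //= eqxx big1 ?addr0 // => t; rewrite eq_sym => /negPf ->.
rewrite /= exchange_big /= -(delta_sum1 aut a s); apply: eq_bigr => q _.
by rewrite -mulr_sumr IH mulr1.
Qed.

Lemma prob_cat s y y' t : P s (y ++ y') t = \sum_q P s y q * P q y' t.
Proof.
elim: y s => [|a y IH] s /=.
  rewrite (bigD1 s) //= eqxx mul1r big1 ?addr0 // => q.
  by rewrite eq_sym => /negPf ->; rewrite mul0r.
under eq_bigr do rewrite IH mulr_sumr.
rewrite exchange_big /=; apply: eq_bigr => q _; rewrite mulr_suml.
by apply: eq_bigr => q' _; rewrite mulrA.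
Qed.

Lemma prob_letter s a t : P s [:: a] t = delta aut a s t.
Proof.
by rewrite /= (bigD1 t) //= eqxx mulr1 big1 ?addr0 // => q /negPf ->; rewrite mulr0.
Qed.

Lemma prob_cat_ge s y y' q t : P s y q * P q y' t <= P s (y ++ y') t.
Proof.
rewrite prob_cat (bigD1 q) //= lerDl.
by apply: sumr_ge0 => i _; rewrite mulr_ge0 ?prob_ge0.
Qed.

Lemma prob_cat_le s y y' t e : (forall q, P q y' t <= e) -> P s (y ++ y') t <= e.
Proof.
move=> le_e; apply: (@le_trans _ _ (\sum_q P s y q * e)).
  by rewrite prob_cat; apply: ler_sum => q _; rewrite ler_wpM2l ?prob_ge0.
by rewrite -mulr_suml prob_sum1 mul1r.
Qed.

Definition mass (s : Q) (y : seq A) (C : pred Q) : R := \sum_(q | C q) P s y q.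

Lemma mass_ge0 s y C : 0 <= mass s y C.
Proof. by apply: sumr_ge0 => q _; apply: prob_ge0. Qed.

Lemma massC s y C : mass s y C + mass s y (predC C) = 1.
Proof. by rewrite -(prob_sum1 s y) (bigID C). Qed.

Lemma mass_le1 s y C : mass s y C <= 1.
Proof. by rewrite -(massC s y C) lerDl mass_ge0. Qed.

Lemma prob_le_mass s y (C : pred Q) t : C t -> P s y t <= mass s y C.
Proof.
by move=> Ct; rewrite /mass (bigD1 t) //= lerDl; apply: sumr_ge0 => q _; apply: prob_ge0.
Qed.

Lemma prob_le1 s y t : P s y t <= 1.
Proof. exact: le_trans (prob_le_mass s y (C := predT) _) (mass_le1 _ _ _). Qed.

Lemma mass_cat s y y' D : mass s (y ++ y') D = \sum_q P s y q * mass q y' D.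
Proof.
rewrite /mass; under eq_bigr do rewrite prob_cat.
by rewrite exchange_big /=; under eq_bigr do rewrite -mulr_sumr.
Qed.

Lemma mass_cat_le s y y' (C D : pred Q) a b :
  (forall q, C q -> mass q y' D <= a) -> (forall q, ~~ C q -> mass q y' D <= b) ->
  mass s (y ++ y') D <= a * mass s y C + b * mass s y (predC C).
Proof.
move=> leC leCc; rewrite mass_cat (bigID C) /= /mass !mulr_sumr.
by apply: lerD; apply: ler_sum => q Cq; rewrite mulrC ler_wpM2r ?prob_ge0 ?leC ?leCc.
Qed.

Lemma mass_cat_ge s y y' (C : pred Q) d :
  (forall q, C q -> mass q y' (predC C) <= d) -> 0 <= d ->
  mass s y C - d <= mass s (y ++ y') C.
Proof.
move=> leak d_ge0.
have := mass_cat_le s y (D := predC C) (b := 1) leak (fun q _ => mass_le1 q y' _).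
have := massC s (y ++ y') C; have := massC s y C.
have := mass_le1 s y C; have := mass_ge0 s y C; nra.
Qed.

Lemma prob_cat_lower s y y' t (C : pred Q) c :
  (forall q, C q -> c <= P q y' t) -> 0 <= c -> c * mass s y C <= P s (y ++ y') t.
Proof.
move=> lower c_ge0; rewrite prob_cat /mass mulr_sumr.
apply: (@le_trans _ _ (\sum_(q | C q) P s y q * P q y' t)); last first.
  rewrite [X in _ <= X](bigID C) /= lerDl.
  by apply: sumr_ge0 => q _; rewrite mulr_ge0 ?prob_ge0.
by apply: ler_sum => q Cq; rewrite mulrC ler_wpM2l ?prob_ge0 ?lower.
Qed.

Lemma delta_min_pos : exists2 mu : R, 0 < mu &
  forall a s t, 0 < delta aut a s t -> mu <= delta aut a s t.
Proof.
pose pos (i : A * Q * Q) := 0 < delta aut i.1.1 i.1.2 i.2.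
case: (pickP pos) => [i0 pos_i0 | none]; last first.
  by exists 1 => // a s t pos_ast; have := none (a, s, t); rewrite /pos /= pos_ast.
case: (arg_minP (fun i => delta aut i.1.1 i.1.2 i.2) pos_i0) => i pos_i min_i.
by exists (delta aut i.1.1 i.1.2 i.2) => // a s t; apply: (min_i (a, s, t)).
Qed.

Lemma idempotent_trans (x : rel Q) s q t : Defs.idempotent x -> x s q -> x q t -> x s t.
Proof. by move=> idx xsq xqt; rewrite -idx; apply/existsP; exists q; rewrite xsq. Qed.

Lemma recurrent_closed (x : rel Q) q q' :
  Defs.idempotent x -> recurrent x q -> x q q' -> recurrent x q'.
Proof.
move=> idx /forallP rec_q xqq'; apply/forallP => t; apply/implyP => xq't.
have := rec_q t; rewrite (idempotent_trans idx xqq' xq't) => /= xtq.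
exact: idempotent_trans idx xtq xqq'.
Qed.

(* Take a successor r of q with fewest successors: if r is not recurrent, each
   successor of r has the same successors as r, hence is recurrent. *)
Lemma recurrent_succ (x : rel Q) q t :
  Defs.idempotent x -> x q t -> exists2 r, x q r & recurrent x r.
Proof.
move=> idx xqt; pose succ r := [set q' | x r q'].
case: (arg_minnP (fun r => #|succ r|) xqt) => r xqr min_r.
case rec_r: (recurrent x r); first by exists r.
move/negbT: rec_r; rewrite negb_forall => /existsP [r']; rewrite negb_imply.
case/andP=> xrr' _; exists r'; first exact: idempotent_trans idx xqr xrr'.
apply/forallP => w; apply/implyP => xr'w.
have xrw := idempotent_trans idx xrr' xr'w.
have sub : succ w \subset succ r.
  by apply/fintype.subsetP => q'; rewrite !inE; apply: idempotent_trans xrw.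
have /eqP eq_succ : succ w == succ r.
  by rewrite eqEcard sub min_r // (idempotent_trans idx xqr xrw).
have : r' \in succ r by rewrite inE.
by rewrite -eq_succ inE.
Qed.

Lemma markov_monoid_limit_word x : markov_monoid aut x -> limit_word x.
Proof.
elim=> [a s | s | u v _ lw_u _ lw_v s | u _ lw_u idu s].
- case: (pickP (fun t => 0 < delta aut a s t)) => [t pos | none]; first by exists t.
  have : \sum_t delta aut a s t <= 0 by apply: sumr_le0 => t _; rewrite leNgt none.
  by rewrite delta_sum1 ler10.
- by exists s; rewrite /lw_one.
- have [q uq] := lw_u s; have [t vt] := lw_v q.
  by exists t; apply/existsP; exists q; rewrite uq.
- have [q uq] := lw_u s; have [r ur rec_r] := recurrent_succ idu uq.
  by exists r; rewrite /lw_sharp ur.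
Qed.

Definition realizes (x : rel Q) (c e : R) (y : seq A) :=
  forall s t, (x s t -> c <= P s y t) /\ (~~ x s t -> P s y t <= e).

Lemma realizes_le x c e e' y : e <= e' -> realizes x c e y -> realizes x c e' y.
Proof.
by move=> le_ee' rxy s t; have [lo up] := rxy s t; split=> // /up /le_trans; apply.
Qed.

Lemma realizes_mass x c e y s (C : pred Q) :
  realizes x c e y -> 0 <= e -> (forall t, C t -> ~~ x s t) -> mass s y C <= e *+ #|Q|.
Proof.
move=> rxy e_ge0 notx; apply: (@le_trans _ _ (\sum_(t | C t) e)).
  by apply: ler_sum => t Ct; apply: (rxy s t).2; apply: notx.
by rewrite -sumr_const [X in _ <= X](bigID C) /= lerDl sumr_ge0.
Qed.

Lemma realizes_cat x1 x2 c1 c2 e1 e2 y1 y2 :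
  realizes x1 c1 e1 y1 -> realizes x2 c2 e2 y2 ->
  0 <= c1 -> 0 <= c2 -> 0 <= e1 -> 0 <= e2 ->
  realizes (lw_cat x1 x2) (c1 * c2) ((e1 + e2) *+ #|Q|) (y1 ++ y2).
Proof.
move=> r1 r2 c1_ge0 c2_ge0 e1_ge0 e2_ge0 s t; split.
  case/existsP=> q /andP [x1sq x2qt]; apply: le_trans (prob_cat_ge s y1 y2 q t).
  by apply: ler_pM => //; [exact: (r1 s q).1 | exact: (r2 q t).1].
rewrite negb_exists => /forallP not_x; rewrite prob_cat -sumr_const.
apply: ler_sum => q _; case x1sq: (x1 s q).
  have x2qt : ~~ x2 q t by move: (not_x q); rewrite x1sq.
  apply: (@le_trans _ _ (1 * e2)); last by rewrite mul1r lerDr.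
  by apply: ler_pM; rewrite ?prob_ge0 ?prob_le1 //; exact: (r2 q t).2.
apply: (@le_trans _ _ (e1 * 1)); last by rewrite mulr1 lerDl.
by apply: ler_pM; rewrite ?prob_ge0 ?prob_le1 //; apply: (r1 s q).2; rewrite x1sq.
Qed.

Lemma realizes_cat_small x1 x2 c1 c2 e : 0 <= c1 -> 0 <= c2 -> 0 < e ->
  exists2 e1, 0 < e1 & forall y1 y2, realizes x1 c1 e1 y1 -> realizes x2 c2 e1 y2 ->
    realizes (lw_cat x1 x2) (c1 * c2) e (y1 ++ y2).
Proof.
move=> c1_ge0 c2_ge0 e_gt0; pose n : R := (#|Q|.*2.+1)%:R.
have n_gt0 : 0 < n by rewrite ltr0n.
have e1_gt0 : 0 < e / n by rewrite divr_gt0.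
exists (e / n) => // y1 y2 r1 r2.
apply: realizes_le (realizes_cat r1 r2 c1_ge0 c2_ge0 (ltW e1_gt0) (ltW e1_gt0)).
rewrite -mulr2n -mulrnA -mulr_natr mulrAC ler_pdivrMr // ler_pM2l // ler_nat.
by rewrite mul2n.
Qed.

Lemma realizes_succ x c e y s :
  realizes x c e y -> 0 <= e -> e *+ #|Q| < 1 -> exists t, x s t.
Proof.
move=> rxy e_ge0 d_lt1; apply/not_existsP => no_succ.
have := realizes_mass (s := s) (C := predT) rxy e_ge0 (fun t _ => introN idP (no_succ t)).
by rewrite /mass prob_sum1 leNgt d_lt1.
Qed.

Lemma eventually_expr_lt (a eps : R) :
  0 <= a -> a < 1 -> 0 < eps -> exists N, forall n, (N <= n)%N -> a ^+ n < eps.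
Proof.
move=> a_ge0 a_lt1 eps_gt0; have : `|a| < 1 by rewrite ger0_norm.
move/cvg_expr/cvgrPdist_lt/(_ eps eps_gt0) => [N _ near_0]; exists N => n le_Nn.
by have := near_0 n le_Nn; rewrite /= sub0r normrN ger0_norm // exprn_ge0.
Qed.

Definition word_pow (y : seq A) k := flatten (nseq k y).

Lemma word_powS y k : word_pow y k.+1 = y ++ word_pow y k.
Proof. by []. Qed.

Lemma word_powSr y k : word_pow y k.+1 = word_pow y k ++ y.
Proof.
elim: k => [|k IH]; first by rewrite /word_pow /= cats0.
by rewrite [LHS]word_powS [in LHS]IH catA.
Qed.

Lemma realizes_pow_lower x c e y k s t : Defs.idempotent x -> realizes x c e y ->
  0 <= c -> x s t -> c ^+ k.+1 <= P s (word_pow y k.+1) t.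
Proof.
move=> idx rxy c_ge0; elim: k s => [|k IH] s xst.
  by rewrite expr1 /word_pow /= cats0; apply: (rxy s t).1.
move: (xst); rewrite -idx => /existsP [q /andP [xsq xqt]].
rewrite exprS word_powS; apply: le_trans (prob_cat_ge s _ _ q _).
by apply: ler_pM ((rxy s q).1 xsq) (IH q xqt); rewrite ?exprn_ge0.
Qed.

Section Sharp.
Variables (x : rel Q) (c e : R) (y : seq A).
Hypotheses (idx : Defs.idempotent x) (c_gt0 : 0 < c) (c_le1 : c <= 1).
Hypotheses (rxy : realizes x c e y) (e_ge0 : 0 <= e) (d_lt1 : e *+ #|Q| < 1).
Let d := e *+ #|Q|.
Let d_ge0 : 0 <= d. Proof. exact: mulrn_wge0. Qed.

Lemma mass_pow_closed s S (C : pred Q) j :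
  (forall q q', C q -> x q q' -> C q') ->
  mass s S C - j%:R * d <= mass s (S ++ word_pow y j) C.
Proof.
move=> closedC; elim: j => [|j IH]; first by rewrite mul0r subr0 cats0.
have leak q : C q -> mass q y (predC C) <= d.
  move=> Cq; apply: realizes_mass rxy e_ge0 _ => t /negP notCt.
  by apply/negP => /(closedC q t Cq).
have := mass_cat_ge s (S ++ word_pow y j) leak d_ge0.
by rewrite word_powSr catA -natr1; lra.
Qed.

Lemma sharp_recurrent s t j : x s t -> recurrent x t ->
  c * (c - j%:R * d) <= P s (word_pow y j.+2) t.
Proof.
move=> xst /forallP rec_t.
have xtt : x t t.
  have [q xtq] := realizes_succ t rxy e_ge0 d_lt1.
  exact: idempotent_trans idx xtq (implyP (rec_t q) xtq).
have closed_t q q' : x t q -> x q q' -> x t q' by apply: idempotent_trans.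
have back q : x t q -> c <= P q y t.
  by move=> xtq'; apply: (rxy q t).1; apply: (implyP (rec_t q)).
rewrite word_powS word_powSr catA.
apply: le_trans (prob_cat_lower _ _ back (ltW c_gt0)); rewrite ler_pM2l //.
apply: le_trans (mass_pow_closed s y j closed_t); rewrite lerD2r.
exact: le_trans ((rxy s t).1 xst) (prob_le_mass _ _ xtt).
Qed.

Lemma sharp_outside s t j : ~~ x s t -> P s (word_pow y j.+1) t <= j.+1%:R * d.
Proof.
move=> not_xst; have closed_s q q' : x s q -> x q q' -> x s q'.
  exact: idempotent_trans.
have out_s : mass s y (predC (x s)) <= d by apply: realizes_mass rxy e_ge0 _ => t' /=.
have := mass_pow_closed s y j closed_s; have := massC s y (x s).
have := massC s (y ++ word_pow y j) (x s).
have : P s (y ++ word_pow y j) t <= mass s (y ++ word_pow y j) (predC (x s)).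
  exact: prob_le_mass.
by rewrite -natr1 word_powS; lra.
Qed.

Let T := [pred q | transient x q].

Lemma transient_mass_step s S : mass s (S ++ y) T <= (1 - c) * mass s S T + d.
Proof.
have leT q : T q -> mass q y T <= 1 - c.
  rewrite inE /transient /recurrent negb_forall => /existsP [w].
  rewrite negb_imply => /andP [xqw _]; have [r xqr rec_r] := recurrent_succ idx xqw.
  have := massC q y T; have := (rxy q r).1 xqr.
  have : P q y r <= mass q y (predC T) by apply: prob_le_mass; rewrite !inE negbK.
  lra.
have leR q : ~~ T q -> mass q y T <= d.
  rewrite inE negbK => rec_q; apply: realizes_mass rxy e_ge0 _ => t.
  by rewrite inE; apply: contra => /(recurrent_closed idx rec_q) ->.
have := mass_cat_le s S leT leR; have := mass_le1 s S (predC T).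
have := mass_ge0 s S (predC T); have := d_ge0; nra.
Qed.

Lemma transient_mass_pow s j : mass s (word_pow y j) T <= (1 - c) ^+ j + j%:R * d.
Proof.
elim: j => [|j IH]; first by rewrite expr0 mul0r addr0 mass_le1.
have c1_ge0 : 0 <= 1 - c by rewrite subr_ge0.
have := transient_mass_step s (word_pow y j); rewrite -word_powSr.
have := ler_wpM2l c1_ge0 IH.
have : (1 - c) * (j%:R * d) <= j%:R * d.
  by apply: ler_piMl; [rewrite mulr_ge0 ?d_ge0 | rewrite gerBl ltW].
by rewrite exprS -natr1; lra.
Qed.

End Sharp.

Lemma realizes_sharp x c e : Defs.idempotent x -> 0 < c -> c <= 1 -> 0 < e ->
  exists2 e', 0 < e' & exists k, forall y, realizes x c e' y ->
    realizes (lw_sharp x) (c * c / 2) e (word_pow y k.+1).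
Proof.
move=> idx c_gt0 c_le1 e_gt0.
have [|||j decay] := @eventually_expr_lt (1 - c) (e / 2); rewrite ?subr_ge0 ?gtrBl //.
  by rewrite divr_gt0.
pose N := j.+2; pose g := Num.min c e / 2; pose M : R := (N * #|Q|).+1%:R.
have [g_c g_e] : g <= c / 2 /\ g <= e / 2.
  by split; rewrite ler_pM2r ?invr_gt0 ?ltr0n // ge_min lexx ?orbT.
have g_gt0 : 0 < g by rewrite divr_gt0 // lt_min c_gt0.
have M_gt0 : 0 < M by rewrite ltr0n.
have e'_gt0 : 0 < g / M by rewrite divr_gt0.
exists (g / M) => //; exists j.+1 => y rxy.
pose d := g / M *+ #|Q|.
have d_ge0 : 0 <= d by rewrite mulrn_wge0 ?ltW.
have Nd : N%:R * d <= g.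
  have -> : N%:R * d = g * ((N * #|Q|)%:R / M) by rewrite /d -mulr_natr natrM; ring.
  by apply: ler_piMr; [exact: ltW | rewrite ler_pdivrMr // mul1r ler_nat].
have N_ge1 : 1 <= N%:R :> R by rewrite ler1n.
have d_lt1 : d < 1 by nra.
move=> s t; split.
- case/andP=> xst rec_t.
  have : j%:R * d <= N%:R * d by apply: ler_wpM2r; rewrite // ler_nat /N -addn2 leq_addr.
  move=> jd; have half_c : c / 2 <= c - j%:R * d by lra.
  apply: le_trans (sharp_recurrent idx c_gt0 rxy (ltW e'_gt0) d_lt1 j xst rec_t).
  by rewrite -mulrA ler_pM2l.
- rewrite negb_and => /orP [not_xst | trans_t].
    by have := sharp_outside idx rxy (ltW e'_gt0) j.+1 not_xst; rewrite -/d -/N; lra.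
  have := transient_mass_pow idx c_gt0 c_le1 rxy (ltW e'_gt0) s N.
  have := decay N (leqW (leqnSn j)).
  have : P s (word_pow y N) t <= mass s (word_pow y N) [pred q | transient x q].
    exact: prob_le_mass.
  by rewrite -/d; lra.
Qed.

Definition realizable x := exists2 c : R, 0 < c /\ c <= 1 &
  forall e, 0 < e -> exists y, realizes x c e y.

Lemma markov_monoid_realizable x : markov_monoid aut x -> realizable x.
Proof.
elim=> [a | | u v _ [cu [cu_gt0 cu_le1] Ru] _ [cv [cv_gt0 cv_le1] Rv]
          | u _ [c [c_gt0 c_le1] Ru] idu].
- have [mu mu_gt0 mu_min] := delta_min_pos; exists mu.
    split=> //; have [t /mu_min] := markov_monoid_limit_word (mm_letter aut a) (q0 aut).
    by move/le_trans; apply; rewrite -prob_letter prob_le1.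
  move=> e e_gt0; exists [:: a] => s t; rewrite prob_letter; split; first exact: mu_min.
  by rewrite /lw_letter -leNgt => /le_trans; apply; rewrite ltW.
- exists 1 => // e e_gt0; exists [::] => s t; rewrite prob_nil /lw_one.
  by case: eqP => _; split=> //; rewrite ltW.
- exists (cu * cv); first by split; [rewrite mulr_gt0 | rewrite mulr_ile1 // ltW].
  move=> e e_gt0.
  have [e1 e1_gt0 cat_e1] := realizes_cat_small u v (ltW cu_gt0) (ltW cv_gt0) e_gt0.
  have [y1 r1] := Ru e1 e1_gt0; have [y2 r2] := Rv e1 e1_gt0.
  by exists (y1 ++ y2); apply: cat_e1.
- exists (c * c / 2).
    have cc_le1 : c * c <= 1 by rewrite mulr_ile1 // ltW.
    by split; [rewrite divr_gt0 ?mulr_gt0 | rewrite ler_pdivrMr // mul1r]; lra.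
  move=> e e_gt0; have [e' e'_gt0 [k sharp_k]] := realizes_sharp idu c_gt0 c_le1 e_gt0.
  by have [y ry] := Ru e' e'_gt0; exists (word_pow y k.+1); apply: sharp_k.
Qed.

Lemma prob_cat_gt0 s y y' t :
  0 < P s (y ++ y') t -> exists2 q, 0 < P s y q & 0 < P q y' t.
Proof.
rewrite prob_cat => pos.
case: (pickP (fun q => (0 < P s y q) && (0 < P q y' t))) => [q /andP [] | none].
  by exists q.
move: pos; rewrite big1 ?ltxx // => q _.
have := none q; rewrite !lt0r !prob_ge0 !andbT => /nandP [] /negPn /eqP ->.
  by rewrite mul0r.
by rewrite mulr0.
Qed.

Lemma prefixS (w : nat -> A) k : Defs.prefix w k.+1 = Defs.prefix w k ++ [:: w k].
Proof. by rewrite /Defs.prefix mkseqS cats1. Qed.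

(* Once the mass of B_k is below eps and lam * mu (mu the least positive
   transition probability), a state of probability eps lies in A_k, and each
   positive-probability successor of a state of A_k gets at least lam * mu,
   so it lies in A_(k+1). *)
Lemma simple_process_persistent (w : nat -> A) p : simple_process aut w p ->
  exists2 lam : R, 0 < lam & forall eps, 0 < eps -> exists K, forall m n q t,
    (K <= m <= n)%N -> eps <= P p (Defs.prefix w m) q ->
    0 < P q (drop m (Defs.prefix w n)) t -> lam <= P p (Defs.prefix w n) t.
Proof.
case=> lam [lam_gt0 [As [Bs [partition [heavy_A vanish_B]]]]].
exists lam => // eps eps_gt0; have [mu mu_gt0 mu_min] := delta_min_pos.
pose eps' := Num.min eps (lam * mu).
have eps'_gt0 : 0 < eps' by rewrite lt_min eps_gt0 mulr_gt0.
have [K light_B] : exists K, forall k,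
    (K <= k)%N -> prob_set aut p (Defs.prefix w k) (Bs k) < eps'.
  move/cvgrPdist_lt: vanish_B => /(_ eps' eps'_gt0) [K _ near_0].
  exists K => k le_Kk; have := near_0 k le_Kk.
  by rewrite /= sub0r normrN ger0_norm // sumr_ge0 // => q _; apply: prob_ge0.
have notB k q : (K <= k)%N -> eps' <= P p (Defs.prefix w k) q -> q \notin Bs k.
  move=> le_Kk heavy_q; apply/negP => qB; have := light_B k le_Kk.
  rewrite /prob_set (bigD1 q) //= ltNge (le_trans heavy_q) // lerDl.
  by rewrite sumr_ge0 // => *; apply: prob_ge0.
have inA k q : q \notin Bs k -> q \in As k.
  move=> notB_q; have /setP/(_ q) := (partition k).2.
  by rewrite !inE (negbTE notB_q) orbF => ->.
exists K => m n q t /andP [le_Km le_mn] heavy_q.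
suff reach_light j t' :
    0 < P q (drop m (Defs.prefix w (m + j)%N)) t' -> t' \notin Bs (m + j)%N.
  by rewrite -(subnKC le_mn) => /reach_light /inA /heavy_A.
elim: j t' => [|j IH] t'.
  rewrite addn0 drop_oversize ?size_mkseq // prob_nil ltr0n lt0b => /eqP <-.
  by apply: notB => //; apply: (le_trans _ heavy_q); rewrite ge_min lexx.
rewrite addnS {1}/Defs.prefix mkseqS drop_rcons ?size_mkseq ?leq_addr // -cats1.
case/prob_cat_gt0 => z /IH /inA /heavy_A heavy_z; rewrite prob_letter => /mu_min delta_z.
apply: notB; first by rewrite (leq_trans le_Km) // -addnS leq_addr.
rewrite prefixS; apply: le_trans (prob_cat_ge p _ _ z _); rewrite prob_letter.
apply: le_trans (ler_pM (ltW lam_gt0) (ltW mu_gt0) heavy_z delta_z).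
by rewrite ge_min lexx orbT.
Qed.

Definition escaping_block (Z : pred Q) (r q t : Q) (cz c0 eta : R) (U X W : seq A) :=
  [/\ forall s, Z s -> mass s (U ++ X ++ W) (predC Z) <= eta,
      forall s, Z s -> cz <= P s (U ++ X ++ W) r,
      c0 <= P r U q,
      0 < P q X t &
      forall s, P s X t <= eta].

Section EscapingBlocks.
Variables (Z : pred Q) (r q t : Q) (cz c0 : R) (U X W : nat -> seq A).
Hypotheses (Zr : Z r) (cz_gt0 : 0 < cz) (c0_gt0 : 0 < c0).
Hypothesis escape :
  forall n, escaping_block Z r q t cz c0 (2^-1 ^+ n.+2) (U n) (X n) (W n).
Let B n := U n ++ X n ++ W n.

Let half_ge0 : 0 <= 2^-1 :> R. Proof. by rewrite invr_ge0 ler0n. Qed.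
Let half_lt1 : 2^-1 < 1 :> R. Proof. by rewrite invf_lt1 ?ltr1n. Qed.

Lemma blocks_mass n : 2^-1 + 2^-1 ^+ n.+1 <= mass r (blocks B n) Z.
Proof.
elim: n => [|n IH].
  by have := prob_le_mass r [::] Zr; rewrite prob_nil_id expr1 /=; lra.
have [leak _ _ _ _] := escape n.
have := mass_cat_ge r (blocks B n) leak (exprn_ge0 _ half_ge0).
by rewrite [2^-1 ^+ n.+2]exprS /=; lra.
Qed.

Lemma blocks_return n : cz / 2 <= P r (blocks B n) r.
Proof.
case: n => [|n]; have [_ return_r _ _ _] := escape 0.
  have := return_r r Zr; have := prob_le1 r (U 0 ++ X 0 ++ W 0) r.
  by rewrite [blocks B 0]/= prob_nil_id; lra.
have [_ {}return_r _ _ _] := escape n.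
have := prob_cat_lower r (blocks B n) return_r (ltW cz_gt0).
have := ler_wpM2l (ltW cz_gt0) (blocks_mass n).
have := mulr_ge0 (ltW cz_gt0) (exprn_ge0 n.+1 half_ge0).
by rewrite /= /B; lra.
Qed.

Lemma escaping_blocks_not_simple : exists w, ~ simple_process aut w r.
Proof.
have B_nonempty n : (0 < size (B n))%N.
  have [_ _ _ _ vanish] := escape n; rewrite /B !size_cat addnCA ltn_addr // lt0n.
  apply/nilP => X_nil; have := vanish t; rewrite X_nil prob_nil_id.
  by rewrite leNgt exprn_ilt1.
have [a0 _] : exists a0 : A, True.
  by case: (B 0) (B_nonempty 0) => // a0; exists a0.
exists (blocks_word B a0) => simple.
have [lam lam_gt0 persist] := simple_process_persistent simple.
have eps_gt0 : 0 < cz / 2 * c0 by rewrite !mulr_gt0 // invr_gt0.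
have [K heavy_path] := persist _ eps_gt0.
have [N small] := eventually_expr_lt half_ge0 half_lt1 lam_gt0.
pose n := maxn K N; have [_ _ enter reach vanish] := escape n.
have pre_U := prefix_blocks_word B_nonempty a0 (y := U n) (erefl (B n)).
have pre_X := prefix_blocks_word B_nonempty a0 (y := U n ++ X n) (catA _ _ (W n)).
have le_m : (K <= size (blocks B n ++ U n) <= size (blocks B n ++ U n ++ X n))%N.
  have le_n := leq_trans (leq_maxl K N) (size_blocks_ge B_nonempty n).
  by rewrite !size_cat (leq_trans le_n) ?leq_addr // addnA leq_addr.
have heavy :
    cz / 2 * c0 <= P r (Defs.prefix (blocks_word B a0) (size (blocks B n ++ U n))) q.
  rewrite /Defs.prefix pre_U; apply: le_trans (prob_cat_ge r _ _ r _).
  by apply: ler_pM (blocks_return n) enter; rewrite ?divr_ge0 ?ltW.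
have := heavy_path _ _ q t le_m heavy.
rewrite /Defs.prefix pre_X catA drop_size_cat // => /(_ reach).
apply/negP; rewrite -ltNge; apply: le_lt_trans (prob_cat_le r _ vanish) _.
by apply: small; exact: leq_trans (leq_maxr K N) (leqW (leqnSn n)).
Qed.

End EscapingBlocks.

Lemma not_simple_of_escaping_blocks (Z : pred Q) r q t cz c0 :
  Z r -> 0 < cz -> 0 < c0 ->
  (forall eta, 0 < eta -> exists U X W, escaping_block Z r q t cz c0 eta U X W) ->
  ~ simple aut.
Proof.
move=> Zr cz_gt0 c0_gt0 small_blocks.
have block n : exists b : seq A * seq A * seq A,
    escaping_block Z r q t cz c0 (2^-1 ^+ n.+2) b.1.1 b.1.2 b.2.
  have half_gt0 : 0 < 2^-1 :> R by rewrite invr_gt0.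
  have [U [X [W escape]]] := small_blocks _ (exprn_gt0 n.+2 half_gt0).
  by exists (U, X, W).
have [b escape] := choice block.
have [w not_simple] := escaping_blocks_not_simple Zr cz_gt0 c0_gt0 escape.
by move=> /(_ w r).
Qed.

Section Witness.
Variables (u v w : rel Q) (r q t : Q).
Hypotheses (mu : markov_monoid aut u) (mv : markov_monoid aut v).
Hypotheses (mw : markov_monoid aut w) (idv : Defs.idempotent v).
Hypotheses (urq : u r q) (vqt : v q t) (trans_t : transient v t).
Let z := lw_cat (lw_cat u (lw_sharp v)) w.
Hypotheses (idz : Defs.idempotent z) (rec_r : recurrent z r).

Lemma witness_root : z r r.
Proof.
have [s zrs] := markov_monoid_limit_word (mm_cat (mm_cat mu (mm_sharp mv idv)) mw) r.
exact: idempotent_trans idz zrs (implyP (forallP rec_r s) zrs).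
Qed.

Lemma witness_escaping_blocks : exists cz c0 : R, [/\ 0 < cz, 0 < c0 &
  forall eta, 0 < eta -> exists U X W, escaping_block (z r) r q t cz c0 eta U X W].
Proof.
have [cu [cu_gt0 _] Ru] := markov_monoid_realizable mu.
have [cv [cv_gt0 cv_le1] Rv] := markov_monoid_realizable mv.
have [cw [cw_gt0 _] Rw] := markov_monoid_realizable mw.
pose cs := cv * cv / 2; have cs_gt0 : 0 < cs by rewrite !mulr_gt0 ?invr_gt0.
exists (cu * cs * cw), cu; split => // [|eta eta_gt0]; first by rewrite !mulr_gt0.
have card_gt0 : (0 < #|Q|)%N by apply/card_gt0P; exists r.
have rho_gt0 : 0 < eta / #|Q|%:R by rewrite divr_gt0 ?ltr0n.
have [e1 e1_gt0 cat_w] := realizes_cat_small (lw_cat u (lw_sharp v)) w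
  (mulr_ge0 (ltW cu_gt0) (ltW cs_gt0)) (ltW cw_gt0) rho_gt0.
have [e2 e2_gt0 cat_uv] :=
  realizes_cat_small u (lw_sharp v) (ltW cu_gt0) (ltW cs_gt0) e1_gt0.
have e3_gt0 : 0 < Num.min e2 eta by rewrite lt_min e2_gt0.
have [e' e'_gt0 [k sharp_k]] := realizes_sharp idv cv_gt0 cv_le1 e3_gt0.
have [U rU] := Ru e2 e2_gt0; have [V rV] := Rv e' e'_gt0; have [W rW] := Rw e1 e1_gt0.
have rX := sharp_k V rV.
have rz : realizes z (cu * cs * cw) (eta / #|Q|%:R) (U ++ word_pow V k.+1 ++ W).
  by rewrite catA; apply: cat_w rW; apply: cat_uv rU (realizes_le _ rX); rewrite ge_min lexx.
exists U, (word_pow V k.+1), W; split.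
- move=> s zrs; apply: le_trans (realizes_mass rz (ltW rho_gt0) _) _.
    by move=> t'; apply: contra => /(idempotent_trans idz zrs).
  by rewrite -(mulr_natr (eta / _)) divfK ?pnatr_eq0 -?lt0n.
- by move=> s zrs; apply: (rz s r).1; apply: (implyP (forallP rec_r s)).
- exact: (rU r q).1.
- exact: lt_le_trans (exprn_gt0 _ cv_gt0) (realizes_pow_lower k idv rV (ltW cv_gt0) vqt).
- move=> s; apply: le_trans ((rX s t).2 _) _; last by rewrite ge_min lexx orbT.
  by rewrite /lw_sharp negb_and -/(transient v t) trans_t orbT.
Qed.

End Witness.

End Automaton.

Theorem proposition5p11 (R : realType) (Q A : finType) (aut : PA R Q A) :
  (exists u v w : rel Q, non_simplicity_witness aut u v w) -> ~ simple aut.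
Proof.
move=> [u [v [w [mu [mv [mw [idv [r [t [idz [rec_r [uvrt trans_t]]]]]]]]]]]].
have [q /andP [urq vqt]] := existsP uvrt.
have [cz [c0 [cz_gt0 c0_gt0 small_blocks]]] :=
  witness_escaping_blocks mu mv mw idv urq vqt trans_t idz rec_r.
exact: not_simple_of_escaping_blocks (witness_root mu mv mw idv idz rec_r)
  cz_gt0 c0_gt0 small_blocks.
Qed.
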